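(* Let $n$ be a positive integer and let $g_k(x)=\sum_{j=0}^{k}\binom{k}{j}^2\binom{2j}{j}x^j$ denote the Sun polynomials. Then (i) $\displaystyle \frac{1}{n}\sum_{k=0}^{n-1}(4k+3)g_k(x)\in\mathbb{Z}[x]$, i.e. every coefficient of the polynomial $\sum_{k=0}^{n-1}(4k+3)g_k(x)$ is divisible by $n$; (ii) $\displaystyle \sum_{k=0}^{n-1}(8k^2+12k+5)g_k(-1)\equiv 0\pmod{n}$.
   Context: The Sun polynomials are $g_k(x)=\sum_{j=0}^{k}\binom{k}{j}^2\binom{2j}{j}x^j$ for integers $k\ge 0$. *)

From HB Require Import structures.
From mathcomp Require Import all_boot all_order all_algebra.
Set Implicit Arguments. Unset Strict Implicit. Unset Printing Implicit Defensive.
Import Order.TTheory GRing.Theory Num.Theory.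
Local Open Scope ring_scope.

Definition sun_g (k : nat) : {poly int} :=
  \sum_(j < k.+1) (('C(k, j) ^ 2 * 'C(2 * j, j))%N)%:R *: 'X^j.

From HB Require Import structures.
From mathcomp Require Import all_boot all_order all_algebra.
From mathcomp Require Import ring zify.
Import GRing.Theory Num.Theory.
Local Open Scope ring_scope.

(* Write a(k, j) = C(k, j)^2 C(2j, j) in the Newton basis of k, using
   C(k, j)^2 = sum_i C(j, i) C(j + i, i) C(k, j + i).  Multiplication by k acts
   on this basis through k C(k, m) = m C(k, m) + (m + 1) C(k, m + 1), and summing
   over k < n sends C(k, m) to C(n, m + 1) = n/(m + 1) C(n - 1, m).  Hence
   n divides sum_{k<n} p(k) a(k, j) as soon as the coefficient of C(k, m) in
   p(k) a(k, j) is divisible by m + 1.  For p = 4k + 3 this holds, which is (i).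
   For p = 8k^2 + 12k + 5 it holds up to j^2 a(k, j) + (j + 1)^2 a(k, j + 1), and
   these leftovers telescope in the alternating sum over j that computes
   g_k(-1), which is (ii).  Each divisibility of coefficients is a polynomial
   combination of the elementary recurrences of binomial coefficients. *)

Definition binz (n k : nat) : int := 'C(n, k)%:Z.

Lemma binz0 n : binz n 0 = 1.
Proof. by rewrite /binz bin0. Qed.

Lemma binz1 n : binz n 1 = n%:Z.
Proof. by rewrite /binz bin1. Qed.

Lemma binzS n m : binz n.+1 m.+1 = binz n m.+1 + binz n m.
Proof. by rewrite /binz binS PoszD. Qed.

Lemma mul_binz_diag n m : (m.+1)%:Z * binz n m.+1 = n%:Z * binz n.-1 m.
Proof. by rewrite /binz -!PoszM mul_bin_diag. Qed.

Lemma mul_binz_left n m : (m.+1)%:Z * binz n m.+1 = (n%:Z - m%:Z) * binz n m.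
Proof.
have [le_mn | lt_nm] := leqP m n.
  by rewrite subzn // /binz -!PoszM mul_bin_left.
by rewrite /binz !bin_small ?mulr0 //; lia.
Qed.

Lemma mul_binz_split k m :
  k%:Z * binz k m = m%:Z * binz k m + (m.+1)%:Z * binz k m.+1.
Proof. by rewrite mul_binz_left; ring. Qed.

Lemma sum_binz n m : \sum_(k < n) binz k m = binz n m.+1.
Proof.
elim: n => [|n IHn]; first by rewrite big_ord0 /binz bin0n.
by rewrite big_ord_recr /= IHn binzS addrC.
Qed.

Lemma mul_binz_central j :
  (j.+1)%:Z * binz (2 * j.+1) j.+1 = 2 * ((2 * j).+1)%:Z * binz (2 * j) j.
Proof.
have -> : (2 * j.+1 = (2 * j).+2)%N by lia.
rewrite mul_binz_diag /=.
have -> : binz (2 * j).+1 j = binz (2 * j).+1 j.+1.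
  rewrite /binz -[in RHS]bin_sub; last by lia.
  by have -> : ((2 * j).+1 - j.+1 = j)%N by lia.
have -> : ((2 * j).+2)%:Z = 2 * (j.+1)%:Z by lia.
by rewrite -mulrA mul_binz_diag mulrA.
Qed.

Lemma bin_mul_bin n a b : (b <= a)%N ->
  ('C(n, a) * 'C(a, b) = 'C(n, b) * 'C(n - b, a - b))%N.
Proof.
move=> le_ba; have [le_an | lt_na] := leqP a n; last first.
  rewrite (bin_small lt_na) mul0n; have [le_bn | lt_nb] := leqP b n.
    by rewrite [X in (_ * X)%N]bin_small ?muln0 //; lia.
  by rewrite bin_small.
have le_bn : (b <= n)%N by lia.
apply/eqP; rewrite -(eqn_pmul2r (_ : 0 < b`! * (a - b)`! * (n - a)`!)%N); last first.
  by rewrite !muln_gt0 !fact_gt0.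
have fact_ab := @bin_fact (n - b) (a - b) (leq_sub2r b le_an).
rewrite (_ : n - b - (a - b) = n - a)%N in fact_ab; [|lia].
apply/eqP; transitivity ('C(n, a) * ('C(a, b) * (b`! * (a - b)`!)) * (n - a)`!)%N.
  by ring.
rewrite bin_fact // -mulnA bin_fact // -(bin_fact le_bn) -fact_ab; ring.
Qed.

Lemma sqr_bin_expansion k j : ('C(k, j) ^ 2 =
  \sum_(i < j.+1) 'C(j, i) * 'C(j + i, i) * 'C(k, j + i))%N.
Proof.
have [le_jk | lt_kj] := leqP j k; last first.
  rewrite bin_small // expnS mul0n big1 // => i _.
  by rewrite (@bin_small k) ?muln0 //; lia.
have := binomial.Vandermonde j (k - j) j; rewrite subnKC // => vdm.
rewrite -mulnn -{1}vdm big_distrl /= (reindex_inj rev_ord_inj) /=.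
apply: eq_bigr => i _; have le_ij : (i <= j)%N by have := ltn_ord i; lia.
rewrite (_ : j.+1 - i.+1 = j - i)%N; last by lia.
rewrite (_ : j - (j - i) = i)%N; last by lia.
rewrite (bin_sub le_ij).
have := @bin_mul_bin k (j + i) j (leq_addr i j).
rewrite (_ : j + i - j = i)%N; last by lia.
rewrite -(bin_sub (leq_addl j i)) (_ : j + i - i = j)%N; last by lia.
by rewrite -mulnA (mulnC 'C(k - j, i)) => <-; ring.
Qed.

Definition shift (c : nat -> int) (i : nat) : int :=
  if i is i'.+1 then c i' else 0.

Definition newton (c : nat -> int) (j L k : nat) : int :=
  \sum_(i < L) c i * binz k (j + i).

Definition mulk_coef (c : nat -> int) (j i : nat) : int :=
  (j + i)%:Z * (c i + shift c i).

Lemma mul_newton c j L k : c L = 0 ->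
  k%:Z * newton c j L.+1 k = newton (mulk_coef c j) j L.+1 k.
Proof.
move=> cL0; rewrite /newton /mulk_coef big_distrr /=.
under eq_bigr do rewrite mulrCA mul_binz_split mulrDr !mulrA.
rewrite big_split /=.
under [RHS]eq_bigr do rewrite mulrDr mulrDl.
rewrite big_split /=; congr (_ + _); first by apply: eq_bigr => i _; ring.
rewrite big_ord_recr [RHS]big_ord_recl /= cL0 !mulr0 mul0r addr0 add0r.
by apply: eq_bigr => i _; rewrite /bump /= add0n addnS; ring.
Qed.

Lemma sum_newton_diag c j L n :
  \sum_(k < n) newton (fun i => ((j + i).+1)%:Z * c i) j L k =
  n%:Z * newton c j L n.-1.
Proof.
rewrite exchange_big /newton big_distrr /=; apply: eq_bigr => i _.
by rewrite -big_distrr /= sum_binz mulrAC mul_binz_diag; ring.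
Qed.

Definition sun_coef (k j : nat) : int := binz k j ^+ 2 * binz (2 * j) j.

Lemma sun_coef_small k j : (k < j)%N -> sun_coef k j = 0.
Proof. by move=> lt_kj; rewrite /sun_coef /binz bin_small // expr2 !mul0r. Qed.

Definition sun_newton (j i : nat) : int :=
  binz (2 * j) j * binz j i * binz (j + i) i.

Lemma sun_newton_small j i : (j < i)%N -> sun_newton j i = 0.
Proof. by move=> lt_ji; rewrite /sun_newton {2}/binz bin_small // mulr0 mul0r. Qed.

(* The bound [j.+3] instead of [j.+1] leaves room for the two multiplications
   by [k] in [sum_weight2_sun_coef]; see the hypothesis of [mul_newton]. *)
Lemma sun_coef_newton k j : sun_coef k j = newton (sun_newton j) j j.+3 k.
Proof.
rewrite /newton (big_ord_recr j.+2) (big_ord_recr j.+1) /=.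
rewrite !sun_newton_small // !mul0r !addr0.
rewrite /sun_coef /binz expr2 -PoszM mulnn sqr_bin_expansion (big_morph Posz PoszD (erefl _)).
by rewrite big_distrl; apply: eq_bigr => i _; rewrite /sun_newton /binz !PoszM; ring.
Qed.

Lemma sun_coef_succ_newton k j :
  sun_coef k j.+1 = newton (shift (sun_newton j.+1)) j j.+3 k.
Proof.
rewrite sun_coef_newton /newton [RHS]big_ord_recl [shift _ 0]/shift.
rewrite mul0r add0r (big_ord_recr j.+3) (big_ord_recr j.+2) /= !sun_newton_small // !mul0r !addr0.
by apply: eq_bigr => i _; rewrite /bump /= add1n addnS addSn.
Qed.

Definition weight1_quot (j i : nat) : int :=
  2 * binz (2 * j) j * binz j.+1 i * binz (j + i) i
  + binz (2 * j).+1 (j + i).+1 * binz (j + i) i ^+ 2.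

(* Instantiated with A = C(2j, j), C0 = C(j, s+1), C1 = C(j, s),
   Cc = C(j+s+1, s+1), Cp = C(j+s, s), B = C(j+1, s+1), D = C(2j+1, j+s+2),
   E = C(2j, j+s+1). *)
Lemma weight1_coef_certificate (j s : nat) (A C0 C1 Cc Cp B D E : int) :
  (j + s.+1)%:Z * Cp = (s.+1)%:Z * Cc ->
  ((j + s.+1).+1)%:Z * D = ((2 * j).+1)%:Z * E ->
  E * Cc = A * C0 ->
  B = C0 + C1 ->
  (s.+1)%:Z * C0 = (j%:Z - s%:Z) * C1 ->
  4 * ((j + s.+1)%:Z * (A * C0 * Cc + A * C1 * Cp)) + 3 * (A * C0 * Cc) =
  ((j + s.+1).+1)%:Z * (2 * A * B * Cc + D * Cc ^+ 2).
Proof.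
move=> rec_Cc rec_D rec_E rec_B rec_C0; apply: subr0_eq.
rewrite -[RHS](_ : 4 * A * C1 * ((j + s.+1)%:Z * Cp - (s.+1)%:Z * Cc)
  - Cc ^+ 2 * (((j + s.+1).+1)%:Z * D - ((2 * j).+1)%:Z * E)
  - ((2 * j).+1)%:Z * Cc * (E * Cc - A * C0)
  - 2 * ((j + s.+1).+1)%:Z * A * Cc * (B - (C0 + C1))
  + 2 * A * Cc * ((s.+1)%:Z * C0 - (j%:Z - s%:Z) * C1) = 0); first by ring.
by rewrite rec_Cc rec_D rec_E rec_B rec_C0; ring.
Qed.

Lemma weight1_coef_factor j i :
  4 * mulk_coef (sun_newton j) j i + 3 * sun_newton j i =
  ((j + i).+1)%:Z * weight1_quot j i.
Proof.
rewrite /mulk_coef /sun_newton /weight1_quot /shift.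
case: i => [|s].
  rewrite !addn0 !binz0.
  have rec : ((2 * j).+1)%:Z * binz (2 * j) j - (j.+1)%:Z * binz (2 * j).+1 j.+1 = 0.
    by rewrite mul_binz_diag subrr.
  by apply: subr0_eq; rewrite -[RHS]rec; ring.
apply: (@weight1_coef_certificate _ _ _ _ _ _ _ _ _ (binz (2 * j) (j + s.+1))).
- by rewrite mul_binz_diag addnS.
- by rewrite mul_binz_diag.
- have := @bin_mul_bin (2 * j) (j + s.+1) j (leq_addr _ _).
  rewrite -(bin_sub (leq_addr s.+1 j)).
  have -> : (j + s.+1 - j = s.+1)%N by lia.
  have -> : (2 * j - j = j)%N by lia.
  by rewrite /binz -!PoszM => ->.
- by rewrite binzS.
- by rewrite mul_binz_left.
Qed.

Lemma sum_weight1_sun_coef n j :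
  \sum_(k < n) (4 * k + 3)%N%:Z * sun_coef k j =
  n%:Z * newton (weight1_quot j) j j.+3 n.-1.
Proof.
rewrite -sum_newton_diag; apply: eq_bigr => k _.
rewrite sun_coef_newton.
transitivity (4 * (k%:Z * newton (sun_newton j) j j.+3 k)
              + 3 * newton (sun_newton j) j j.+3 k); first by ring.
rewrite mul_newton ?sun_newton_small // /newton !big_distrr -big_split /=.
by apply: eq_bigr => i _; rewrite -weight1_coef_factor; ring.
Qed.

Definition weight2_quot (j i : nat) : int :=
  (2 * j%:Z ^+ 2 + 13 * j%:Z + 9) * (binz (2 * j) j * binz j.+1 i * binz (j + i) i)
  - 2 * (j%:Z + 2) * (j%:Z + 1 - i%:Z) * (binz (2 * j) j * binz j.+2 i * binz (j + i) i).

(* Instantiated with A = C(2j, j), Ap = C(2j+2, j+1), C0 = C(j, s+2),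
   C1 = C(j, s+1), C2 = C(j, s), Cc = C(j+s+2, s+2), Cp1 = C(j+s+1, s+1),
   Cp2 = C(j+s, s), B1 = C(j+1, s+2), B2 = C(j+2, s+2), W1 = C(j+1, s+1),
   Wc = C(j+s+2, s+1). *)
Lemma weight2_coef_certificate (j s : nat)
    (A C0 C1 C2 Cc Cp1 Cp2 B1 B2 Ap W1 Wc : int) :
  (j + s.+2)%:Z * Cp1 = (s.+2)%:Z * Cc ->
  (j + s.+1)%:Z * Cp2 = (s.+1)%:Z * Cp1 ->
  B1 = C0 + C1 ->
  B2 = C0 + 2 * C1 + C2 ->
  W1 = C1 + C2 ->
  (j.+1)%:Z * Ap = 2 * ((2 * j).+1)%:Z * A ->
  (j.+1)%:Z * Wc = (s.+2)%:Z * Cc ->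
  (s.+2)%:Z * C0 = (j%:Z - (s.+1)%:Z) * C1 ->
  (s.+1)%:Z * C1 = (j%:Z - s%:Z) * C2 ->
  8 * ((j + s.+2)%:Z * ((j + s.+2)%:Z * (A * C0 * Cc + A * C1 * Cp1)
                       + (j + s.+1)%:Z * (A * C1 * Cp1 + A * C2 * Cp2)))
  + 12 * ((j + s.+2)%:Z * (A * C0 * Cc + A * C1 * Cp1)) + 5 * (A * C0 * Cc) =
  ((j + s.+2).+1)%:Z * ((2 * j%:Z ^+ 2 + 13 * j%:Z + 9) * (A * B1 * Cc)
                        - 2 * (j%:Z + 2) * (j%:Z + 1 - (s.+2)%:Z) * (A * B2 * Cc))
  + j%:Z ^+ 2 * (A * C0 * Cc) + (j.+1)%:Z ^+ 2 * (Ap * W1 * Wc).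
Proof.
move=> rec_Cp1 rec_Cp2 rec_B1 rec_B2 rec_W1 rec_Ap rec_Wc rec_C0 rec_C1.
apply: subr0_eq.
pose t : int := (j + s.+2)%:Z.
pose lam0 : int := 2 * (j%:Z + 2) * (j%:Z - s%:Z - 1).
pose lam1 : int := 3 + 3 * j%:Z - 2 * j%:Z ^+ 2 + 4 * (s%:Z + 2) - 2 * (s%:Z + 2) * j%:Z.
pose lam2 : int := - 2 - 4 * j%:Z - 2 * j%:Z ^+ 2 + 4 * (s%:Z + 2) - 2 * (s%:Z + 2) * j%:Z.
rewrite -[RHS](_ :
    (8 * t + 8 * (j + s.+1)%:Z + 12) * A * C1 * ((j + s.+2)%:Z * Cp1 - (s.+2)%:Z * Cc)
  + 8 * t * A * C2 * ((j + s.+1)%:Z * Cp2 - (s.+1)%:Z * Cp1)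
  + 8 * (s.+1)%:Z * A * C2 * ((j + s.+2)%:Z * Cp1 - (s.+2)%:Z * Cc)
  - (t + 1) * (2 * j%:Z ^+ 2 + 13 * j%:Z + 9) * A * Cc * (B1 - (C0 + C1))
  + (t + 1) * lam0 * A * Cc * (B2 - (C0 + 2 * C1 + C2))
  - (j.+1)%:Z * Wc * W1 * ((j.+1)%:Z * Ap - 2 * ((2 * j).+1)%:Z * A)
  - 2 * ((2 * j).+1)%:Z * A * W1 * ((j.+1)%:Z * Wc - (s.+2)%:Z * Cc)
  - 2 * ((2 * j).+1)%:Z * (s.+2)%:Z * A * Cc * (W1 - (C1 + C2))
  + lam1 * A * Cc * ((s.+2)%:Z * C0 - (j%:Z - (s.+1)%:Z) * C1)
  + lam2 * A * Cc * ((s.+1)%:Z * C1 - (j%:Z - s%:Z) * C2) = 0).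
  by rewrite /t /lam0 /lam1 /lam2; ring.
rewrite rec_Cp1 rec_Cp2 rec_B1 rec_B2 rec_W1 rec_Ap rec_Wc rec_C0 rec_C1; ring.
Qed.

Lemma weight2_coef_split j i :
  8 * mulk_coef (mulk_coef (sun_newton j) j) j i + 12 * mulk_coef (sun_newton j) j i
  + 5 * sun_newton j i =
  ((j + i).+1)%:Z * weight2_quot j i + j%:Z ^+ 2 * sun_newton j i
  + (j.+1)%:Z ^+ 2 * shift (sun_newton j.+1) i.
Proof.
rewrite /mulk_coef /sun_newton /weight2_quot /shift.
case: i => [|[|s]] /=.
- by rewrite !addn0 !binz0; ring.
- rewrite !addn0 !binz0 !binz1 addn1; apply: subr0_eq.
  rewrite -[RHS](_ : - (j.+1)%:Z * ((j.+1)%:Z * binz (2 * j.+1) j.+1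
                       - 2 * ((2 * j).+1)%:Z * binz (2 * j) j) = 0); first by ring.
  by rewrite mul_binz_central subrr mulr0.
have -> : (j.+1 + s.+1 = j + s.+2)%N by lia.
apply: weight2_coef_certificate.
- by rewrite mul_binz_diag addnS.
- by rewrite mul_binz_diag addnS.
- by rewrite binzS.
- by rewrite !binzS; ring.
- by rewrite binzS.
- exact: mul_binz_central.
- rewrite mul_binz_left.
  by have -> : (j + s.+2)%:Z - (s.+1)%:Z = (j.+1)%:Z by lia.
- exact: mul_binz_left.
- exact: mul_binz_left.
Qed.

Lemma sum_weight2_sun_coef n j :
  \sum_(k < n) (8 * k ^ 2 + 12 * k + 5)%N%:Z * sun_coef k j =
  n%:Z * newton (weight2_quot j) j j.+3 n.-1
  + j%:Z ^+ 2 * \sum_(k < n) sun_coef k j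
  + (j.+1)%:Z ^+ 2 * \sum_(k < n) sun_coef k j.+1.
Proof.
rewrite -sum_newton_diag !big_distrr -!big_split /=; apply: eq_bigr => k _.
rewrite sun_coef_succ_newton sun_coef_newton.
set E := newton (sun_newton j) j j.+3 k.
transitivity (8 * (k%:Z * (k%:Z * E)) + 12 * (k%:Z * E) + 5 * E); first by ring.
have mulk_top : mulk_coef (sun_newton j) j j.+2 = 0.
  by rewrite /mulk_coef /shift !sun_newton_small // addr0 mulr0.
rewrite /E !mul_newton ?sun_newton_small // /newton.
rewrite !big_distrr -!big_split /=.
apply: eq_bigr => i _.
transitivity ((8 * mulk_coef (mulk_coef (sun_newton j) j) j i
  + 12 * mulk_coef (sun_newton j) j i + 5 * sun_newton j i) * binz k (j + i)).
  by ring.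
by rewrite weight2_coef_split; ring.
Qed.

Lemma alternating_telescope (R : comPzRingType) (F : nat -> R) m :
  \sum_(j < m) (-1) ^+ j * (F j + F j.+1) = F 0%N - (-1) ^+ m * F m.
Proof.
elim: m => [|m IHm]; first by rewrite big_ord0 expr0 mul1r subrr.
by rewrite big_ord_recr /= IHm exprS; ring.
Qed.

Lemma sun_g_poly k :
  sun_g k = \poly_(j < k.+1) ((('C(k, j) ^ 2 * 'C(2 * j, j))%N)%:R : int).
Proof. by rewrite poly_def. Qed.

Lemma coef_sun_g k j : (sun_g k)`_j = sun_coef k j.
Proof.
rewrite sun_g_poly coef_poly.
case: ltnP => [_|lt_kj]; first by rewrite natrM natrX !natz.
by rewrite sun_coef_small.
Qed.

Lemma horner_sun_g_opp1 k n : (k < n)%N ->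
  (sun_g k).[-1] = \sum_(j < n) (-1) ^+ j * sun_coef k j.
Proof.
move=> lt_kn; rewrite sun_g_poly horner_poly.
rewrite (eq_bigr (fun j : 'I_k.+1 => (-1) ^+ j * sun_coef k j)); last first.
  by move=> j _; rewrite natrM natrX !natz mulrC.
rewrite (big_ord_widen n (fun j => (-1) ^+ j * sun_coef k j) lt_kn) big_mkcond /=.
apply: eq_bigr => j _; case: ltnP => // lt_kj.
by rewrite sun_coef_small // mulr0.
Qed.

Lemma coef_sum_weight1_sun_g n i :
  (\sum_(k < n) ((4 * k + 3)%N)%:R *: sun_g k)`_i =
  n%:Z * newton (weight1_quot i) i i.+3 n.-1.
Proof.
rewrite coef_sum -sum_weight1_sun_coef.
by apply: eq_bigr => k _; rewrite coefZ coef_sun_g natz.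
Qed.

Lemma sum_weight2_horner_sun_g n :
  \sum_(k < n) ((8 * k ^ 2 + 12 * k + 5)%N)%:R * (sun_g k).[-1] =
  n%:Z * \sum_(j < n) (-1) ^+ j * newton (weight2_quot j) j j.+3 n.-1.
Proof.
pose F j := j%:Z ^+ 2 * \sum_(k < n) sun_coef k j.
have F0 : F 0%N = 0 by rewrite /F expr2 !mul0r.
have Fn : F n = 0 by rewrite /F big1 ?mulr0 // => k _; rewrite sun_coef_small.
transitivity (\sum_(j < n) (-1) ^+ j *
    \sum_(k < n) (8 * k ^ 2 + 12 * k + 5)%N%:Z * sun_coef k j).
  transitivity (\sum_(k < n) \sum_(j < n)
      (-1) ^+ j * ((8 * k ^ 2 + 12 * k + 5)%N%:Z * sun_coef k j)).
    apply: eq_bigr => k _; rewrite natz (horner_sun_g_opp1 _ _ (ltn_ord k)) big_distrr.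
    by apply: eq_bigr => j _; rewrite [RHS]mulrCA.
  by rewrite exchange_big; apply: eq_bigr => j _; rewrite big_distrr.
under eq_bigr => j _ do rewrite sum_weight2_sun_coef -/(F j) -/(F j.+1) -addrA mulrDr.
rewrite big_split /= alternating_telescope F0 Fn mulr0 subrr addr0 big_distrr.
by apply: eq_bigr => j _; rewrite mulrCA.
Qed.

Theorem theorem1 (n : nat) (hn : (0 < n)%N) :
  (forall i : nat,
     (n%:Z %| (\sum_(k < n) ((4 * k + 3)%N)%:R *: sun_g k)`_i)%Z)
  /\
  (n%:Z %| \sum_(k < n) ((8 * k ^ 2 + 12 * k + 5)%N)%:R * (sun_g k).[-1])%Z.
Proof.
split=> [i|].
  by rewrite coef_sum_weight1_sun_g dvdz_mulr.
by rewrite sum_weight2_horner_sun_g dvdz_mulr.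
Qed.
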